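(* Let $\mathbf{x}=x_1,\ldots,x_n$ and $\mathbf{u}=u_1,\ldots,u_m$ be differential indeterminates over $\mathbb{C}$, and let $\mathbf{f}=f_1,\ldots,f_n\in\mathbb{C}[\mathbf{x},\mathbf{u}]$ and $\mathbf{g}=g_1,\ldots,g_s\in\mathbb{C}[\mathbf{x},\mathbf{u}]$ be polynomials such that the polynomial ideal $(\mathbf{g})\subseteq\mathbb{C}[\mathbf{x},\mathbf{u}]$ is radical and $0$-dimensional. Then $$1\in[\dot{\mathbf{x}}-\mathbf{f},\mathbf{g}]\subseteq\mathbb{C}\{\mathbf{x},\mathbf{u}\}\quad\Longleftrightarrow\quad 1\in(\dot{\mathbf{x}}-\mathbf{f},\mathbf{g},\dot{\mathbf{g}})\subseteq\mathbb{C}[\mathbf{x},\mathbf{u},\dot{\mathbf{x}},\dot{\mathbf{u}}].$$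
   Context: $\mathbb{C}\{\mathbf{x},\mathbf{u}\}$ is the differential polynomial ring $\mathbb{C}[x_j^{(p)},u_k^{(p)}: p\in\mathbb{N}_0]$ with derivation $x_j^{(p)}\mapsto x_j^{(p+1)}$, $u_k^{(p)}\mapsto u_k^{(p+1)}$, and $\mathbb{C}$ as constants; $\dot{z}$ denotes $z^{(1)}$, and for a family of polynomials $\mathbf{h}$, $\dot{\mathbf{h}}$ denotes the family of their (total) derivatives. $[\mathbf{h}]$ denotes the differential ideal generated by $\mathbf{h}$, and $(\cdot)$ the ordinary polynomial ideal in the indicated polynomial ring. $\dot{\mathbf{x}}-\mathbf{f}$ denotes $\dot x_1-f_1,\ldots,\dot x_n-f_n$. *)

(* multinomials' monoid algebras {malg C[{cmonom V}]} give
   polynomial rings over C in an arbitrary (possibly infinite) set V of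
   variables. *)
From HB Require Import structures.
From mathcomp Require Import all_boot all_algebra.
From mathcomp Require Import reals Rstruct complex.
From mathcomp Require Import finmap.
From mathcomp.multinomials Require Import monalg.
Set Implicit Arguments. Unset Strict Implicit. Unset Printing Implicit Defensive.
Import GRing.Theory.
Local Open Scope ring_scope.

Definition C : fieldType := (Rdefinitions.R)[i].

Definition PolyRing (V : choiceType) := {malg C[{cmonom V}]}.

Definition var (V : choiceType) (v : V) : PolyRing V := mkmalgU (ucm v) (1 : C).

Definition rename (V W : choiceType) (sigma : V -> W) (p : PolyRing V)
  : PolyRing W :=
  \sum_(k <- msupp p) (p@_k : C) *: \prod_(v <- finsupp k) var (sigma v) ^+ (k v).

(* Total derivative of p, written out by the chain rule:
     sum over monomials c*k of p and variables w of k of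
     emb (d(c*k)/dw) * (derivative of the variable w),
   where emb embeds the polynomials into the target ring and dv w is the
   variable representing the derivative of w. *)
Definition tot_deriv (V W : choiceType) (emb : PolyRing V -> PolyRing W)
  (dv : V -> W) (p : PolyRing V) : PolyRing W :=
  \sum_(k <- msupp p) \sum_(w <- finsupp k)
     emb (mkmalgU (divcm k (ucm w)) (p@_k *+ k w)) * var (dv w).

(* Base variables x_1..x_n (inl j) and u_1..u_m (inr k). *)
Definition Vb (n m : nat) : choiceType := ('I_n + 'I_m)%type.

Definition Pxu (n m : nat) := PolyRing (Vb n m).
(* C[x,u,x',u'] : variable (v, i) is the i-th derivative of v, i in {0,1} *)
Definition Pxu1 (n m : nat) := PolyRing (Vb n m * 'I_2)%type.
(* C{x,u} : variable (v, p) is v^(p) *)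
Definition DPxu (n m : nat) := PolyRing (Vb n m * nat)%type.

Definition Dder (n m : nat) : DPxu n m -> DPxu n m :=
  @tot_deriv _ _ id (fun w : Vb n m * nat => (w.1, w.2.+1)).

Definition emb_D (n m : nat) : Pxu n m -> DPxu n m :=
  @rename _ (Vb n m * nat)%type (fun v => (v, 0%N)).
Definition emb_1 (n m : nat) : Pxu n m -> Pxu1 n m :=
  @rename _ (Vb n m * 'I_2)%type (fun v => (v, ord0)).

Definition dot1 (n m : nat) (g : Pxu n m) : Pxu1 n m :=
  @tot_deriv _ (Vb n m * 'I_2)%type (@emb_1 n m)
     (fun v => (v, ord_max)) g.

Definition is_ideal (R : comPzRingType) (I : R -> Prop) :=
  [/\ I 0, (forall a b, I a -> I b -> I (a + b)) & (forall r a, I a -> I (r * a))].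

Definition in_ideal (R : comPzRingType) (G : R -> Prop) (a : R) :=
  forall I, is_ideal I -> (forall b, G b -> I b) -> I a.

Definition in_diff_ideal (R : comPzRingType) (d : R -> R) (G : R -> Prop) (a : R) :=
  forall I, is_ideal I -> (forall b, I b -> I (d b)) -> (forall b, G b -> I b) -> I a.

Definition radical_ideal (R : comPzRingType) (G : R -> Prop) :=
  forall (a : R) (k : nat), in_ideal G (a ^+ k) -> in_ideal G a.

(* (G) is 0-dimensional: the quotient PolyRing V / (G) is a
   finite-dimensional C-vector space. *)
Definition zero_dim_ideal (V : choiceType) (G : PolyRing V -> Prop) :=
  exists b : seq (PolyRing V), forall a : PolyRing V,
    exists c : 'I_(size b) -> C,
      in_ideal G (a - \sum_(i < size b) c i *: b`_i).

Definition gens_D (n m s : nat) (f : 'I_n -> Pxu n m) (g : 'I_s -> Pxu n m)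
  (h : DPxu n m) : Prop :=
  (exists j : 'I_n, h = var ((inl j : Vb n m), 1%N) - emb_D (f j))
  \/ (exists i : 'I_s, h = emb_D (g i)).

Definition gens_1 (n m s : nat) (f : 'I_n -> Pxu n m) (g : 'I_s -> Pxu n m)
  (h : Pxu1 n m) : Prop :=
  [\/ (exists j : 'I_n, h = var ((inl j : Vb n m), ord_max) - emb_1 (f j)),
      (exists i : 'I_s, h = emb_1 (g i))
    | (exists i : 'I_s, h = dot1 (g i))].

From HB Require Import structures.
From mathcomp Require Import all_boot all_algebra all_field.
From mathcomp Require Import Rstruct complex.
From mathcomp Require Import finmap.
From mathcomp.multinomials Require Import monalg.
From mathcomp Require Import ring.
Set Implicit Arguments. Unset Strict Implicit. Unset Printing Implicit Defensive.
Import GRing.Theory.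
Local Open Scope ring_scope.

(* The inclusion
   C[x,u,x',u'] -> C{x,u} maps x'-f, g, g' into [x'-f, g], which gives the
   implication from right to left.  Conversely, killing all proper
   derivatives maps [x'-f, g] into (f, g), so 1 lies in (f, g) in C[x,u]; since
   f_j = x_j' - (x_j' - f_j) it remains to show that x_j' lies in (x'-f, g, g').
   As (g) is radical and zero-dimensional it contains q(x_j) for a squarefree
   univariate q; differentiating puts q'(x_j) x_j' into (g, g'), and a Bezout
   relation u q + w q' = 1 isolates x_j'. *)

(* Locked so that unification never unfolds monomials into their coefficient
   functions, which makes rewriting in polynomial expressions diverge. *)
Definition monomial_def (V : choiceType) (k : cmonom V) (c : C) : PolyRing V :=
  << c *g k >>.
Fact monomial_key : unit. Proof. by []. Qed.
Definition monomial := locked_with monomial_key monomial_def.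
Canonical monomial_unlockable := [unlockable fun monomial].
Arguments monomial {V} k c.

Section Monomials.
Variable V : choiceType.
Implicit Types (k l : cmonom V) (w : V) (a b c : C).

Lemma monomialE k c : monomial k c = << c *g k >>.
Proof. by rewrite unlock. Qed.

Lemma monomial_is_zmod_morphism k : zmod_morphism (monomial k).
Proof. by move=> a b; rewrite !monomialE monalgUB. Qed.

HB.instance Definition _ k := GRing.isZmodMorphism.Build C (PolyRing V)
  (monomial k) (monomial_is_zmod_morphism k).

Lemma monomialM k l a b : monomial k a * monomial l b = monomial (mulcm k l) (a * b).
Proof. by rewrite !monomialE malgM_def fgmulUU. Qed.

Lemma monomial1 c : monomial (@onecm V) c = c%:MP.
Proof. by rewrite monomialE. Qed.

Lemma var_monomial w : var w = monomial (ucm w) 1.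
Proof. by rewrite monomialE. Qed.

Lemma mcoeff_monomial k c : (monomial k c)@_k = c.
Proof. by rewrite monomialE mcoeffUU. Qed.

Lemma msupp_monomial_le k c : (msupp (monomial k c) `<=` [fset k])%fset.
Proof. by rewrite monomialE msuppU_le. Qed.

Lemma polyring_monomialE (p : PolyRing V) : p = \sum_(k <- msupp p) monomial k p@_k.
Proof. by rewrite {1}(monalgE p); apply: eq_bigr => k _; rewrite monomialE. Qed.

Lemma cmonom_split k w : w \in finsupp k -> k = mulcm (ucm w) (divcm k (ucm w)).
Proof.
move=> wk; apply/eqP/cmP => i; rewrite mulcmE divcmE ucmE.
case: eqP => [<-|_]; last by rewrite subn0.
by move: wk; rewrite -cmE_neq0 -lt0n add1n subn1 => /prednK.
Qed.

Lemma polyring_ind (P : PolyRing V -> Prop) :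
  (forall p q, P p -> P q -> P (p + q)) -> (forall c, P c%:MP) ->
  (forall w q, P q -> P (var w * q)) -> forall p, P p.
Proof.
move=> PD PC PV p; rewrite (polyring_monomialE p); apply: big_ind => [|//|k _].
  by have := PC 0; rewrite -monomial1 raddf0.
move: (p@_k) => c; elim: {k}(mdeg k) {-2}k (leqnn (mdeg k)) => [|N IHN] k.
  by rewrite leqn0 mdeg_eq0 => /eqP->; rewrite monomial1; apply: PC.
have [k0|[w wk]] := fset_0Vmem (finsupp k).
  by rewrite (@mdeg_eq0I _ k) ?mdegE ?k0 ?big_nil // monomial1.
rewrite (cmonom_split wk) mdegM mdegU add1n ltnS => le.
by have := PV w _ (IHN _ le); rewrite var_monomial monomialM mul1r.
Qed.
End Monomials.

Section Substitution.
Variables (V W : choiceType) (s : V -> PolyRing W).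

Definition monom_subst (k : cmonom V) : PolyRing W := \prod_(v <- finsupp k) s v ^+ k v.

Lemma monom_substEw (k : cmonom V) (S : {fset V}) : (finsupp k `<=` S)%fset ->
  monom_subst k = \prod_(v <- S) s v ^+ k v.
Proof.
move=> le; rewrite /monom_subst (big_fset_incl _ le) // => x _.
by rewrite -cmE_eq0 => /eqP ->; rewrite expr0.
Qed.

Lemma monom_subst_is_mmorphism : mmorphism monom_subst.
Proof.
split=> [k l|]; last by rewrite /monom_subst mdom1 big_nil.
rewrite (@monom_substEw _ (finsupp k `|` finsupp l)%fset) ?mdomD //.
rewrite (monom_substEw (fsubsetUl (finsupp k) (finsupp l))).
rewrite (monom_substEw (fsubsetUr (finsupp k) (finsupp l))) -big_split.
by apply: eq_bigr => v _; rewrite cmM exprD.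
Qed.

HB.instance Definition _ := isMultiplicative.Build (cmonom V) (PolyRing W)
  monom_subst monom_subst_is_mmorphism.

Definition subst : PolyRing V -> PolyRing W := mmap (@malgC (cmonom W) C) monom_subst.

HB.instance Definition _ :=
  GRing.RMorphism.copy subst (mmap (@malgC (cmonom W) C) monom_subst).

Lemma subst_var v : subst (var v) = s v.
Proof.
by rewrite /subst /var mmapU /= mpolyC1E mul1r /monom_subst mdomU big_seq_fset1 cmUU.
Qed.

Lemma substC c : subst c%:MP = c%:MP.
Proof. exact: mmapC. Qed.
End Substitution.

Section Rename.
Variables (V W : choiceType) (sigma : V -> W).

Lemma renameE : rename sigma =1 subst (fun v => var (sigma v)).
Proof. by move=> p; rewrite /subst mmapE; apply: eq_bigr => k _; rewrite mul_malgC. Qed.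

Lemma rename_is_zmod_morphism : zmod_morphism (rename sigma).
Proof. by move=> p q; rewrite !renameE rmorphB. Qed.

Lemma rename_is_monoid_morphism : monoid_morphism (rename sigma).
Proof. by split=> [|p q]; rewrite !renameE (rmorph1, rmorphM). Qed.

HB.instance Definition _ := GRing.isZmodMorphism.Build (PolyRing V) (PolyRing W)
  (rename sigma) rename_is_zmod_morphism.
HB.instance Definition _ := GRing.isMonoidMorphism.Build (PolyRing V) (PolyRing W)
  (rename sigma) rename_is_monoid_morphism.

Lemma rename_var v : rename sigma (var v) = var (sigma v).
Proof. by rewrite renameE subst_var. Qed.

Lemma renameC c : rename sigma c%:MP = c%:MP.
Proof. by rewrite renameE substC. Qed.
End Rename.

Lemma polyring_rmorph_eq (V : choiceType) (S : pzRingType)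
    (F G : {rmorphism PolyRing V -> S}) :
  (forall c, F c%:MP = G c%:MP) -> (forall v, F (var v) = G (var v)) -> F =1 G.
Proof.
move=> FGC FGvar; apply: polyring_ind => [p q Fp Fq|//|w q Fq].
  by rewrite !rmorphD Fp Fq.
by rewrite !rmorphM FGvar Fq.
Qed.

Definition leibniz (R S : pzRingType) (e d : R -> S) :=
  forall a b, d (a * b) = e a * d b + e b * d a.

Lemma leibniz_rmorph (R S T : pzRingType) (phi : {rmorphism S -> T}) (e d : R -> S) :
  leibniz e d -> leibniz (phi \o e) (phi \o d).
Proof. by move=> Ld a b /=; rewrite Ld rmorphD !rmorphM. Qed.

Section TotalDerivative.
Variables (V W : choiceType) (e : {rmorphism PolyRing V -> PolyRing W}) (dv : V -> W).

Definition tot_deriv_monom (k : cmonom V) (c : C) : PolyRing W :=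
  \sum_(w <- finsupp k) e (monomial (divcm k (ucm w)) (c *+ k w)) * var (dv w).

Lemma tot_deriv_monom_is_zmod_morphism (k : cmonom V) : zmod_morphism (tot_deriv_monom k).
Proof.
move=> a b; rewrite /tot_deriv_monom -sumrB; apply: eq_bigr => w _.
by rewrite mulrnBl !raddfB mulrBl.
Qed.

HB.instance Definition _ (k : cmonom V) := GRing.isZmodMorphism.Build C (PolyRing W)
  (tot_deriv_monom k) (tot_deriv_monom_is_zmod_morphism k).

Lemma tot_deriv_monomEw (k : cmonom V) (c : C) (S : {fset V}) : (finsupp k `<=` S)%fset ->
  tot_deriv_monom k c
  = \sum_(w <- S) e (monomial (divcm k (ucm w)) (c *+ k w)) * var (dv w).
Proof.
move=> le; rewrite /tot_deriv_monom (big_fset_incl _ le) // => w _.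
by rewrite -cmE_eq0 => /eqP ->; rewrite mulr0n !raddf0 mul0r.
Qed.

Lemma tot_derivE p : tot_deriv e dv p = \sum_(k <- msupp p) tot_deriv_monom k p@_k.
Proof. by apply: eq_bigr => k _; apply: eq_bigr => w _; rewrite monomialE. Qed.

Lemma tot_derivEw p (S : {fset cmonom V}) : (msupp p `<=` S)%fset ->
  tot_deriv e dv p = \sum_(k <- S) tot_deriv_monom k p@_k.
Proof.
move=> le; rewrite tot_derivE (big_fset_incl _ le) // => k _ /mcoeff_outdom ->.
exact: raddf0.
Qed.

Lemma tot_deriv_is_zmod_morphism : zmod_morphism (tot_deriv e dv).
Proof.
move=> p q; rewrite (tot_derivEw (msuppB_le p q)).
rewrite (tot_derivEw (fsubsetUl (msupp p) (msupp q))).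
rewrite (tot_derivEw (fsubsetUr (msupp p) (msupp q))) -sumrB.
by apply: eq_bigr => k _; rewrite mcoeffB raddfB.
Qed.

HB.instance Definition _ := GRing.isZmodMorphism.Build (PolyRing V) (PolyRing W)
  (tot_deriv e dv) tot_deriv_is_zmod_morphism.

Lemma tot_deriv_monomial (k : cmonom V) (c : C) :
  tot_deriv e dv (monomial k c) = tot_deriv_monom k c.
Proof. by rewrite (tot_derivEw (msupp_monomial_le k c)) big_seq_fset1 mcoeff_monomial. Qed.

Lemma monomial_divcmM (k l : cmonom V) w (a b : C) :
  monomial (divcm (mulcm k l) (ucm w)) (a * b *+ l w)
  = monomial k a * monomial (divcm l (ucm w)) (b *+ l w).
Proof.
have [->|lw0] := eqVneq (l w) 0%N; first by rewrite !mulr0n !raddf0 mulr0.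
have -> : divcm (mulcm k l) (ucm w) = mulcm k (divcm l (ucm w)).
  apply/eqP/cmP => i; rewrite mulcmE !divcmE mulcmE ucmE.
  by case: eqP => [<-|_]; rewrite ?subn0 // addnBA // lt0n.
by rewrite monomialM mulrnAr.
Qed.

Lemma tot_deriv_leibniz_monomial (k l : cmonom V) (a b : C) :
  tot_deriv e dv (monomial k a * monomial l b) =
  e (monomial k a) * tot_deriv e dv (monomial l b)
  + e (monomial l b) * tot_deriv e dv (monomial k a).
Proof.
rewrite monomialM !tot_deriv_monomial.
set S := (finsupp k `|` finsupp l)%fset.
have kS : (finsupp k `<=` S)%fset by apply: fsubsetUl.
have lS : (finsupp l `<=` S)%fset by apply: fsubsetUr.
have klS : (finsupp (mulcm k l) `<=` S)%fset by rewrite [finsupp _]mdomD.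
rewrite (tot_deriv_monomEw _ kS) (tot_deriv_monomEw _ lS) (tot_deriv_monomEw _ klS).
rewrite !big_distrr -big_split; apply: eq_bigr => w _ /=.
have -> : monomial (divcm (mulcm k l) (ucm w)) (a * b *+ mulcm k l w)
    = monomial k a * monomial (divcm l (ucm w)) (b *+ l w)
      + monomial l b * monomial (divcm k (ucm w)) (a *+ k w).
  rewrite mulcmE mulrnDr raddfD /= addrC monomial_divcmM; congr (_ + _).
  by rewrite [a * b]mulrC [mulcm k l]mulcmC monomial_divcmM.
by rewrite !mulrA -!rmorphM -[RHS]mulrDl -rmorphD.
Qed.

Lemma tot_deriv_leibniz : leibniz e (tot_deriv e dv).
Proof.
move=> p q; rewrite [p]polyring_monomialE [q]polyring_monomialE.
rewrite big_distrlr raddf_sum /= !rmorph_sum !raddf_sum /= !big_distrlr /=.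
rewrite [X in _ + X]exchange_big -big_split /=; apply: eq_bigr => k _.
rewrite raddf_sum -big_split /=; apply: eq_bigr => l _.
exact: tot_deriv_leibniz_monomial.
Qed.

Lemma tot_derivC c : tot_deriv e dv c%:MP = 0.
Proof. by rewrite -monomial1 tot_deriv_monomial /tot_deriv_monom mdom1 big_nil. Qed.

Lemma tot_deriv_var v : tot_deriv e dv (var v) = var (dv v).
Proof.
rewrite var_monomial tot_deriv_monomial /tot_deriv_monom mdomU big_seq_fset1 cmUU.
have -> : divcm (ucm v) (ucm v) = @onecm V.
  by apply/eqP/cmP => i; rewrite divcmE subnn onecmE.
by rewrite mulr1n monomial1 mpolyC1E rmorph1 mul1r.
Qed.
End TotalDerivative.

Lemma derivation_polyring_eq (V : choiceType) (S : comPzRingType) (e : PolyRing V -> S)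
    (d1 d2 : {additive PolyRing V -> S}) :
  leibniz e d1 -> leibniz e d2 -> (forall c, d1 c%:MP = 0) -> (forall c, d2 c%:MP = 0) ->
  (forall v, d1 (var v) = d2 (var v)) -> d1 =1 d2.
Proof.
move=> L1 L2 C1 C2 d12var; apply: polyring_ind => [p q d12p d12q|c|w q d12q].
- by rewrite !raddfD d12p d12q.
- by rewrite C1 C2.
- by rewrite L1 L2 d12var d12q.
Qed.

Lemma derivation_horner (K : nzRingType) (R S : comNzRingType) (kap : {rmorphism K -> R})
    (e : {rmorphism R -> S}) (d : {additive R -> S}) :
  leibniz e d -> (forall c, d (kap c) = 0) ->
  forall (y : R) (p : {poly K}), d (map_poly kap p).[y] = e (map_poly kap p^`()).[y] * d y.
Proof.
move=> dM dK y; elim/poly_ind => [|p c IH].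
  by rewrite deriv0 !rmorph0 horner0 raddf0 rmorph0 mul0r.
rewrite derivMXaddC !(rmorphD, rmorphM) /= map_polyX map_polyC.
rewrite !(hornerD, hornerM, hornerX, hornerC) raddfD dM dK IH !(rmorphD, rmorphM) /=.
ring.
Qed.

Section Ideals.
Variable R : comPzRingType.
Implicit Types (G : R -> Prop) (a b r : R).

Lemma in_ideal_is_ideal G : is_ideal (in_ideal G).
Proof.
split=> [I [] //|a b aG bG I Iid GI|r a aG I Iid GI]; case: (Iid) => _ ID IM.
  by apply: ID; [apply: aG | apply: bG].
by apply: IM; apply: aG.
Qed.

Lemma in_ideal_gen G a : G a -> in_ideal G a.
Proof. by move=> Ga I _; apply. Qed.

Lemma in_ideal0 G : in_ideal G 0.
Proof. by case: (in_ideal_is_ideal G). Qed.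

Lemma in_idealD G a b : in_ideal G a -> in_ideal G b -> in_ideal G (a + b).
Proof. by case: (in_ideal_is_ideal G) => _ + _; apply. Qed.

Lemma in_idealMl G r a : in_ideal G a -> in_ideal G (r * a).
Proof. by case: (in_ideal_is_ideal G) => _ _; apply. Qed.

Lemma in_idealMr G r a : in_ideal G a -> in_ideal G (a * r).
Proof. by rewrite mulrC; apply: in_idealMl. Qed.

Lemma in_idealB G a b : in_ideal G a -> in_ideal G b -> in_ideal G (a - b).
Proof. by move=> aG bG; apply: in_idealD => //; rewrite -mulN1r; apply: in_idealMl. Qed.

Lemma in_ideal_sum G (I : Type) (r : seq I) (P : pred I) (F : I -> R) :
  (forall i, P i -> in_ideal G (F i)) -> in_ideal G (\sum_(i <- r | P i) F i).
Proof. by move=> FG; apply: big_ind => //; [apply: in_ideal0 | apply: in_idealD]. Qed.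

Lemma in_ideal_subr G a b : in_ideal G a -> in_ideal G (a - b) -> in_ideal G b.
Proof.
move=> aG abG; have -> : b = a - (a - b) by rewrite opprB addrC subrK.
exact: in_idealB.
Qed.
End Ideals.

Lemma in_ideal_bezout (R S : comPzRingType) (phi : {rmorphism R -> S}) (G : S -> Prop)
    (u w b d : R) (z : S) :
  u * b + w * d = 1 -> in_ideal G (phi b) -> in_ideal G (phi d * z) -> in_ideal G z.
Proof.
move=> bez bG dzG; rewrite -[z]mul1r -(rmorph1 phi) -bez rmorphD !rmorphM mulrDl -!mulrA.
by apply: in_idealD; apply: in_idealMl => //; apply: in_idealMr.
Qed.

Lemma is_ideal_rmorph_preim (R S : comPzRingType) (f : {rmorphism R -> S}) (I : S -> Prop) :
  is_ideal I -> is_ideal (fun a => I (f a)).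
Proof.
case=> I0 ID IM; split=> [|a b|r a]; rewrite ?rmorph0 ?rmorphD ?rmorphM //.
exact: ID.
exact: IM.
Qed.

Lemma in_ideal_rmorph (R S : comPzRingType) (f : {rmorphism R -> S})
    (G : R -> Prop) (H : S -> Prop) :
  (forall b, G b -> in_ideal H (f b)) -> forall a, in_ideal G a -> in_ideal H (f a).
Proof.
move=> GH a aG; apply: (aG (fun a => in_ideal H (f a))) GH.
exact: (is_ideal_rmorph_preim f (in_ideal_is_ideal H)).
Qed.

Lemma in_idealZ (V : choiceType) (G : PolyRing V -> Prop) (c : C) a :
  in_ideal G a -> in_ideal G (c *: a).
Proof. by rewrite -mul_malgC; apply: in_idealMl. Qed.

Lemma tall_matrix_left_kernel (K : fieldType) (N : nat) (M : 'M[K]_(N.+1, N)) :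
  exists2 v : 'rV[K]_N.+1, v != 0 & v *m M = 0.
Proof.
have /rowV0Pn[v /sub_kermxP vM0 v_neq0] : kermx M != 0.
  by rewrite -mxrank_eq0 mxrank_ker subn_eq0 -ltnNge ltnS rank_leq_col.
by exists v.
Qed.

Lemma sum_scale_mulmx (K : pzRingType) (A : lmodType K) (p q : nat)
    (v : 'rV[K]_p) (M : 'M[K]_(p, q)) (B : seq A) :
  \sum_(i < p) v 0 i *: \sum_(l < q) M i l *: B`_l = \sum_(l < q) (v *m M) 0 l *: B`_l.
Proof.
under eq_bigr do rewrite scaler_sumr.
rewrite exchange_big; apply: eq_bigr => l _.
by rewrite mxE scaler_suml; apply: eq_bigr => i _; rewrite scalerA.
Qed.

Lemma zero_dim_ann_poly (V : choiceType) (G : PolyRing V -> Prop) (y : PolyRing V) :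
  zero_dim_ideal G -> exists2 p : {poly C}, p != 0 & in_ideal G (map_poly malgC p).[y].
Proof.
case=> b ybG.
(* The powers y^0, ..., y^(size b) are dependent modulo (G), as b spans the quotient. *)
have [c yc] := fin_all_exists (fun i : 'I_(size b).+1 => ybG (y ^+ i)).
pose M := \matrix_(i < (size b).+1, l < size b) c i l.
have [v v_neq0 vM0] := tall_matrix_left_kernel M.
exists (\poly_(i < (size b).+1) v 0 (inord i)).
  apply: contraNneq v_neq0 => p0; apply/eqP/rowP => i; rewrite mxE.
  have := coef_poly (size b).+1 (fun j => v 0 (inord j)) i.
  by rewrite p0 coef0 ltn_ord inord_val.
have -> : (map_poly malgC (\poly_(i < (size b).+1) v 0 (inord i))).[y]
    = \sum_(i < (size b).+1) v 0 i *: (y ^+ i - \sum_(l < size b) M i l *: b`_l).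
  rewrite (eq_bigr _ (fun i _ => scalerBr _ _ _)) sumrB.
  rewrite [X in _ - X]sum_scale_mulmx vM0 [X in _ - X]big1 => [|l _]; last first.
    by rewrite mxE scale0r.
  rewrite subr0 (@horner_coef_wide _ (size b).+1); last by rewrite size_map_poly size_poly.
  by apply: eq_bigr => i _; rewrite coef_map coef_poly ltn_ord inord_val /= mul_malgC.
apply: in_ideal_sum => i _; apply: in_idealZ.
by rewrite /M; under eq_bigr do rewrite mxE; exact: yc.
Qed.

Lemma closed_poly_dvd_separable_pow (F : closedFieldType) (p : {poly F}) : p != 0 ->
  exists2 q : {poly F}, coprimep q q^`() & exists k, p %| q ^+ k.
Proof.
move=> p_neq0; have [r pE] := closed_field_poly_normal p.
pose q := \prod_(z <- undup r) ('X - z%:P).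
have dvd_q_pow s : {subset s <= r} -> \prod_(z <- s) ('X - z%:P) %| q ^+ size s.
  elim: s => [|a s IH] sub_r; first by rewrite big_nil dvd1p.
  rewrite big_cons exprS dvdp_mul //.
    by rewrite dvdp_XsubCl root_prod_XsubC mem_undup sub_r ?mem_head.
  by apply: IH => z zs; apply: sub_r; rewrite inE zs orbT.
exists q; first by have := separable_prod_XsubC (undup r); rewrite undup_uniq unlock.
by exists (size r); rewrite pE dvdpZl ?lead_coef_eq0 //; apply: dvd_q_pow.
Qed.

Lemma radical_separable_ann (F : closedFieldType) (R : comNzRingType)
    (kap : {rmorphism F -> R}) (G : R -> Prop) (y : R) (p : {poly F}) :
  radical_ideal G -> p != 0 -> in_ideal G (map_poly kap p).[y] ->
  exists2 q : {poly F}, coprimep q q^`() & in_ideal G (map_poly kap q).[y].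
Proof.
move=> radG p_neq0 pG.
have [q q_sep [k /dvdpP[h qkE]]] := closed_poly_dvd_separable_pow p_neq0.
exists q => //; apply: (radG _ k).
by rewrite -horner_exp -rmorphXn qkE rmorphM hornerM; apply: in_idealMl.
Qed.

Section DifferentialSetting.
Variables n m : nat.
Local Notation VB := (Vb n m).

HB.instance Definition _ :=
  GRing.RMorphism.copy (@emb_1 n m) (rename (fun v : VB => (v, ord0 : 'I_2))).
HB.instance Definition _ :=
  GRing.RMorphism.copy (@emb_D n m) (rename (fun v : VB => (v, 0%N))).
HB.instance Definition _ := GRing.Additive.copy (@dot1 n m)
  (tot_deriv (@emb_1 n m) (fun v : VB => (v, ord_max : 'I_2))).
HB.instance Definition _ := GRing.Additive.copy (@Dder n m)
  (tot_deriv (idfun : DPxu n m -> DPxu n m) (fun w : VB * nat => (w.1, w.2.+1))).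

Lemma dot1M (a b : Pxu n m) : dot1 (a * b) = emb_1 a * dot1 b + emb_1 b * dot1 a.
Proof. exact: tot_deriv_leibniz. Qed.

Lemma DderM (a b : DPxu n m) : Dder (a * b) = a * Dder b + b * Dder a.
Proof. exact: (tot_deriv_leibniz idfun). Qed.

Definition inclD : Pxu1 n m -> DPxu n m :=
  subst (fun w : VB * 'I_2 => var ((w.1, val w.2) : VB * nat)).

Definition kill_derivs : DPxu n m -> Pxu n m :=
  subst (fun w : VB * nat => if w.2 is 0 then var w.1 else 0).

HB.instance Definition _ := GRing.RMorphism.copy inclD
  (subst (fun w : VB * 'I_2 => var ((w.1, val w.2) : VB * nat))).
HB.instance Definition _ := GRing.RMorphism.copy kill_derivs
  (subst (fun w : VB * nat => if w.2 is 0 then var w.1 else 0)).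

Lemma inclD_emb_1 p : inclD (emb_1 p) = emb_D p.
Proof.
apply: (@polyring_rmorph_eq _ _ (inclD \o @emb_1 n m) (@emb_D n m)) => [c|v] /=.
  by rewrite [emb_1 _]renameC [emb_D _]renameC [inclD _]substC.
by rewrite [emb_1 _]rename_var [emb_D _]rename_var [inclD _]subst_var.
Qed.

Lemma kill_derivs_emb_D p : kill_derivs (emb_D p) = p.
Proof.
apply: (@polyring_rmorph_eq _ _ (kill_derivs \o @emb_D n m) idfun) => [c|v] /=.
  by rewrite [emb_D _]renameC [kill_derivs _]substC.
by rewrite [emb_D _]rename_var [kill_derivs _]subst_var.
Qed.

Lemma inclD_dot1 p : inclD (dot1 p) = Dder (emb_D p).
Proof.
apply: (@derivation_polyring_eq _ _ (@emb_D n m) (inclD \o @dot1 n m)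
  (@Dder n m \o @emb_D n m)) => [a b|a b|c|c|v] /=.
- by rewrite -!inclD_emb_1; apply: (leibniz_rmorph inclD); apply: tot_deriv_leibniz.
- by rewrite rmorphM DderM.
- by rewrite [dot1 _]tot_derivC rmorph0.
- by rewrite [emb_D _]renameC [Dder _](tot_derivC idfun).
- rewrite [dot1 _]tot_deriv_var [emb_D _]rename_var [Dder _](tot_deriv_var idfun).
  by rewrite [inclD _]subst_var.
Qed.

Lemma kill_derivs_Dder p : kill_derivs (Dder p) = 0.
Proof.
rewrite [Dder p](tot_derivE idfun) raddf_sum big1 // => k _ /=.
rewrite /tot_deriv_monom raddf_sum big1 // => w _ /=.
by rewrite rmorphM /= [kill_derivs (var _)]subst_var mulr0.
Qed.
End DifferentialSetting.

Section Generators.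
Variables (n m s : nat) (f : 'I_n -> Pxu n m) (g : 'I_s -> Pxu n m).
Local Notation G := (fun h : Pxu n m => exists i : 'I_s, h = g i).

Definition gens_fg (h : Pxu n m) : Prop := (exists j, h = f j) \/ (exists i, h = g i).

Lemma in_ideal_emb_1_dot1 h :
  in_ideal G h -> in_ideal (gens_1 f g) (emb_1 h) /\ in_ideal (gens_1 f g) (dot1 h).
Proof.
move=> hG; apply: (hG (fun h =>
  in_ideal (gens_1 f g) (emb_1 h) /\ in_ideal (gens_1 f g) (dot1 h))).
  split=> [|a b [aE aD] [bE bD]|r a [aE aD]].
  - by split; [rewrite rmorph0 | rewrite raddf0]; apply: in_ideal0.
  - split; first by rewrite rmorphD; apply: in_idealD aE bE.
    by rewrite raddfD; apply: in_idealD aD bD.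
  - split; first by rewrite rmorphM; apply: in_idealMl aE.
    by rewrite dot1M; apply: in_idealD; [apply: in_idealMl aD | apply: in_idealMr aE].
by move=> _ [i ->]; split; apply: in_ideal_gen; [apply: Or32 | apply: Or33]; exists i.
Qed.

Lemma xdot_in_ideal_gens_1 (j : 'I_n) : radical_ideal G -> zero_dim_ideal G ->
  in_ideal (gens_1 f g) (var ((inl j : Vb n m), ord_max)).
Proof.
move=> radG zdG; set x := var (inl j : Vb n m).
have [p p_neq0 pG] := zero_dim_ann_poly x zdG.
have [q q_sep qG] := radical_separable_ann radG p_neq0 pG.
have [[u w] /= bez] := Bezout_eq1_coprimepP q q^`() q_sep.
have [qE qD] := in_ideal_emb_1_dot1 qG.
have dq : dot1 (map_poly malgC q).[x]
    = emb_1 (map_poly malgC q^`()).[x] * var ((inl j : Vb n m), ord_max).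
  rewrite [LHS](derivation_horner (@dot1M n m)) => [|c]; last exact: tot_derivC.
  by congr (_ * _); apply: tot_deriv_var.
apply: (in_ideal_bezout (phi := @emb_1 n m \o horner_eval x \o map_poly malgC) bez qE).
by have := qD; rewrite dq.
Qed.

Lemma in_ideal_emb_1_gens_1 : radical_ideal G -> zero_dim_ideal G ->
  forall a, in_ideal gens_fg a -> in_ideal (gens_1 f g) (emb_1 a).
Proof.
move=> radG zdG.
apply: (@in_ideal_rmorph (Pxu n m) (Pxu1 n m) (@emb_1 n m)) => _ [[j ->]|[i ->]].
  apply: (in_ideal_subr (xdot_in_ideal_gens_1 j radG zdG)).
  by apply: in_ideal_gen; apply: Or31; exists j.
by apply: in_ideal_gen; apply: Or32; exists i.
Qed.

Lemma in_diff_ideal_kill_derivs a :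
  in_diff_ideal (@Dder n m) (gens_D f g) a -> in_ideal gens_fg (kill_derivs a).
Proof.
move=> aD; apply: (aD (fun b => in_ideal gens_fg (kill_derivs b))).
- exact: (@is_ideal_rmorph_preim (DPxu n m) (Pxu n m) (@kill_derivs n m) _
    (in_ideal_is_ideal _)).
- by move=> b _; rewrite kill_derivs_Dder; apply: in_ideal0.
move=> _ [[j ->]|[i ->]]; last first.
  by rewrite kill_derivs_emb_D; apply: in_ideal_gen; right; exists i.
rewrite rmorphB /= [kill_derivs (var _)]subst_var kill_derivs_emb_D /=.
by apply: in_idealB; [apply: in_ideal0 | apply: in_ideal_gen; left; exists j].
Qed.

Lemma in_diff_ideal_inclD a :
  in_ideal (gens_1 f g) a -> in_diff_ideal (@Dder n m) (gens_D f g) (inclD a).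
Proof.
move=> aI I Iid IDder GI; apply: (aI (fun b => I (inclD b))).
  exact: is_ideal_rmorph_preim.
move=> _ [[j ->]|[i ->]|[i ->]].
- rewrite rmorphB /= [inclD (var _)]subst_var inclD_emb_1.
  by apply: GI; left; exists j.
- by rewrite inclD_emb_1; apply: GI; right; exists i.
- by rewrite inclD_dot1; apply/IDder/GI; right; exists i.
Qed.
End Generators.

Theorem proposition3p1 (n m s : nat) (f : 'I_n -> Pxu n m) (g : 'I_s -> Pxu n m) :
  radical_ideal (fun h : Pxu n m => exists i : 'I_s, h = g i) ->
  zero_dim_ideal (fun h : Pxu n m => exists i : 'I_s, h = g i) ->
  (in_diff_ideal (@Dder n m) (gens_D f g) 1 <-> in_ideal (gens_1 f g) 1).
Proof.
move=> radG zdG; split=> [/in_diff_ideal_kill_derivs|/in_diff_ideal_inclD].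
  by rewrite rmorph1 => /(in_ideal_emb_1_gens_1 radG zdG); rewrite rmorph1.
by rewrite rmorph1.
Qed.
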